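(* Let $k,m>1$ be integers and $g\in S_{km}$ acting on $\{1,\dots,km\}$. Then $g$ preserves some partition of $\{1,\dots,km\}$ into $k$ blocks each of size $m$ (equivalently, $g$ lies in an imprimitive permutation group with $k$ blocks of size $m$) if and only if the cycle partition of $g$ (the multiset of its cycle lengths, fixed points counted as cycles of length $1$) is an i-partition of type $(k,m)$.
   Context: Let $k,m$ be positive integers. If $(m_1,\dots,m_l)$ is a partition of $m$, then the partition $(km_1,\dots,km_l)$ of $km$ is called an ic-partition of type $(k,m)$. For a partition $P$, a clustering of $P$ is a partition of the multiset of parts of $P$ into sub-multisets $P_1,\dots,P_r$ (called clusters), each regarded as a partition of the sum of its elements. A partition of $km$ is an i-partition of type $(k,m)$ if it has a clustering $P_1,\dots,P_r$ and there is a partition $(k_1,\dots,k_r)$ of $k$ such that, for each $i$, $P_i$ is an ic-partition (of $k_im$) of type $(k_i,m)$. *)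

From mathcomp Require Import all_boot fingroup perm.
Set Implicit Arguments. Unset Strict Implicit. Unset Printing Implicit Defensive.

Definition is_partition (s : seq nat) (n : nat) : bool :=
  all (fun x => 0 < x) s && (sumn s == n).

Definition ic_partition (p : seq nat) (k m : nat) : Prop :=
  exists mu : seq nat, is_partition mu m /\ perm_eq p (map (muln k) mu).

Definition i_partition (p : seq nat) (k m : nat) : Prop :=
  is_partition p (k * m) /\
  exists (cl : seq (seq nat)) (ks : seq nat),
    [/\ perm_eq (flatten cl) p, is_partition ks k, size ks = size cl &
        forall i, i < size cl -> ic_partition (nth [::] cl i) (nth 0 ks i) m].

Definition cycle_type (T : finType) (g : {perm T}) : seq nat :=
  [seq #|C| | C : {set T} <- enum (porbits g)].

Definition preserves_block_system (T : finType) (g : {perm T}) (k m : nat) : Prop :=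
  exists P : {set {set T}},
    [/\ partition P [set: T], #|P| = k,
        {in P, forall B : {set T}, #|B| = m} &
        {in P, forall B : {set T}, g @: B \in P}].

From mathcomp Require Import all_boot fingroup perm.
Set Implicit Arguments. Unset Strict Implicit. Unset Printing Implicit Defensive.

(* If g preserves a block system P, then g permutes the blocks, and the orbits of this
   action cluster the blocks.  A cycle C of g lies over a single orbit Q and meets all
   blocks B of Q in the same number of points, so |C| = |Q| * |C :&: B|: the cycles over
   Q form an ic-partition of type (|Q|, m), and the orbit sizes partition k.
   Conversely, given a cluster of cycles of lengths d * m_1, ..., d * m_l with
   m_1 + ... + m_l = m, sort the points of each cycle by their position along it modulo
   d: this gives d blocks of size m which g permutes cyclically. *)

Lemma sum_card_setI (T : finType) (P : {set {set T}}) (A : {set T}) :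
  trivIset P -> A \subset cover P -> \sum_(B in P) #|A :&: B| = #|A|.
Proof.
move=> trivP sAP.
have ->: \sum_(B in P) #|A :&: B| = \sum_(B in P) \sum_(x in A) (x \in B).
  apply: eq_bigr => B _; rewrite -sum1_card [RHS]big_mkcond [LHS]big_mkcond /=.
  by apply: eq_bigr => x _; rewrite inE; case: (x \in A); case: (x \in B).
rewrite exchange_big /= -sum1_card; apply: eq_bigr => x xA.
have xP : x \in cover P by apply: (subsetP sAP).
rewrite (bigD1 (pblock P x)) ?pblock_mem //= mem_pblock xP big1 // => B /andP[BP nB].
by apply/eqP; rewrite eqb0; apply: contra nB => xB; rewrite eq_sym (def_pblock trivP BP xB).
Qed.

Lemma partitionU (T : finType) (P1 P2 : {set {set T}}) (D1 D2 : {set T}) :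
  partition P1 D1 -> partition P2 D2 -> [disjoint D1 & D2] ->
  partition (P1 :|: P2) (D1 :|: D2) /\ #|P1 :|: P2| = #|P1| + #|P2|.
Proof.
move=> pP1 pP2 dD; have [c1 c2] := (cover_partition pP1, cover_partition pP2).
split.
  apply/and3P; split.
  - by rewrite /cover bigcup_setU -/(cover P1) -/(cover P2) c1 c2.
  - by rewrite trivIsetU ?c1 ?c2 ?(partition_trivIset pP1) ?(partition_trivIset pP2).
  - by rewrite in_setU (partition0 pP1) (partition0 pP2).
rewrite cardsU; suff ->: P1 :&: P2 = set0 by rewrite cards0 subn0.
apply/setP => B; rewrite !inE; apply/negP => /andP[B1 B2].
have /set0Pn[x xB] := partition_neq0 pP1 B1.
move/pred0P: dD => /(_ x) /=.
by rewrite (subsetP (partitionS pP1 B1) _ xB) (subsetP (partitionS pP2 B2) _ xB).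
Qed.

Lemma perm_flatten_filter (X Y : eqType) (s : seq X) (t : seq Y) (p : Y -> pred X) :
  (forall x, x \in s -> count (p^~ x) t = 1) ->
  perm_eq s (flatten [seq filter (p y) s | y <- t]).
Proof.
move=> count_t; apply/seq.permP => a.
rewrite count_flatten -map_comp sumnE big_map -sum1_count.
have ->: \sum_(y <- t) (count a \o filter (p y)) s =
         \sum_(y <- t) \sum_(x <- s | a x) (p y x : nat).
  apply: eq_bigr => y _ /=; rewrite count_filter -sum1_count big_mkcond [RHS]big_mkcond /=.
  by apply: eq_bigr => x _; rewrite /predI /=; case: (a x); case: (p y x).
rewrite exchange_big /= big_seq_cond [RHS]big_seq_cond; apply: eq_bigr => x /andP[xs _].
by rewrite -(count_t x xs) -sum1_count big_mkcond.
Qed.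

Lemma perm_map_exists (X Y : eqType) (f : X -> Y) (t : seq Y) (s : seq X) :
  perm_eq t (map f s) -> exists2 s', perm_eq s' s & map f s' = t.
Proof.
elim: t s => [|y t IH] s pts.
  by exists [::] => //; case: s pts => // x s /perm_size.
have /mapP[x xs ey] : y \in map f s by rewrite -(perm_mem pts) mem_head.
rewrite {y}ey in pts *.
have /IH[s' ps' <-] : perm_eq t (map f (rem x s)).
  by rewrite -(perm_cons (f x)) (perm_trans pts) // -map_cons perm_map ?perm_to_rem.
by exists (x :: s') => //; rewrite perm_sym (perm_trans (perm_to_rem xs)) // perm_cons perm_sym.
Qed.

Lemma count_mod_iota d a r : r < d ->
  count (fun i => i %% d == r) (iota 0 (d * a)) = a.
Proof.
move=> lt_rd; elim: a => [|a IHa]; first by rewrite muln0.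
rewrite mulnSr iotaD count_cat IHa add0n -addn1; congr (_ + _).
have -> : iota (d * a) d = map (addn (d * a)) (iota 0 d) by rewrite -iotaDl addn0.
transitivity (count (pred1 r) (iota 0 d)).
  rewrite count_map; apply: eq_in_count => i; rewrite mem_iota /= => lt_id.
  by rewrite mulnC modnMDl modn_small.
by rewrite count_uniq_mem ?iota_uniq // mem_iota lt_rd.
Qed.

Section Cycles.
Variables (T : finType) (g : {perm T}).

Lemma porbit_eq x y : y \in porbit g x -> porbit g y = porbit g x.
Proof. by move=> xy; apply/eqP; rewrite eq_porbit_mem. Qed.

Lemma porbitsE C y : C \in porbits g -> y \in C -> C = porbit g y.
Proof. by case/imsetP => x _ -> /porbit_eq. Qed.

Lemma porbit_perm1 y : porbit g (g y) = porbit g y.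
Proof. by have := porbit_perm g 1 y; rewrite expg1. Qed.

Lemma partition_porbits : partition (porbits g) [set: T].
Proof.
apply/and3P; split.
- apply/eqP/setP => x; rewrite inE; apply/bigcupP.
  by exists (porbit g x); [apply: imset_f | apply: porbit_id].
- apply/trivIsetP => _ _ /imsetP[x _ ->] /imsetP[y _ ->] /eqP neq_xy.
  apply/pred0P => z /=; apply/negbTE/andP => -[zx zy]; apply: neq_xy.
  by rewrite -(porbit_eq zx) (porbit_eq zy).
- by apply/imsetP => -[x _ /setP/(_ x)]; rewrite porbit_id inE.
Qed.

Lemma imset_porbits i C : C \in porbits g -> (g ^+ i)%g @: C = C.
Proof.
case/imsetP => x _ ->; apply/eqP.
rewrite eqEcard card_imset ?leqnn ?andbT; last exact: perm_inj.
by apply/subsetP => _ /imsetP[_ /porbitP[j ->] ->]; rewrite -permM -expgD mem_porbit.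
Qed.

Lemma sum_card_porbitsI A : \sum_(C in porbits g) #|A :&: C| = #|A|.
Proof.
rewrite (sum_card_setI (partition_trivIset partition_porbits)) //.
by rewrite (cover_partition partition_porbits) subsetT.
Qed.

Lemma cycle_type_partition : is_partition (cycle_type g) #|T|.
Proof.
apply/andP; split.
  apply/allP => _ /mapP[_ /[!mem_enum] /imsetP[x _ ->] ->].
  by rewrite lt0n card_porbit_neq0.
rewrite /cycle_type sumnE big_map big_enum /= -cardsT.
by rewrite (card_partition partition_porbits).
Qed.

Let fconnect_perm_sym : connect_sym (frel g) := fconnect_sym (@perm_inj _ g).

Lemma porbit_fconnect x y : (y \in porbit g x) = fconnect g x y.
Proof.
apply/porbitP/idP => [[i ->] | /iter_findex <-]; first by rewrite permX fconnect_iter.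
by exists (findex g x y); rewrite permX.
Qed.

Lemma card_porbit x : #|porbit g x| = fingraph.order g x.
Proof. by apply: eq_card => y; rewrite inE porbit_fconnect. Qed.

Definition cycle_pos y := findex g (froot g y) y.

Lemma fconnect_froot y : fconnect g (froot g y) =1 fconnect g y.
Proof.
by apply: same_connect fconnect_perm_sym _ _ _; rewrite fconnect_perm_sym connect_root.
Qed.

Lemma order_froot y : fingraph.order g (froot g y) = #|porbit g y|.
Proof. by rewrite card_porbit; apply: eq_card; apply: fconnect_froot. Qed.

Lemma cycle_pos_perm1 y : cycle_pos (g y) = (cycle_pos y).+1 %% #|porbit g y|.
Proof.
have y_root : fconnect g (froot g y) y by rewrite fconnect_froot connect0.
have root_gy : froot g (g y) = froot g y.
  by apply/esym/(rootP fconnect_perm_sym); apply: fconnect1.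
rewrite /cycle_pos root_gy -[X in findex _ _ (g X)](iter_findex y_root) -iterS.
rewrite -order_froot {1}(divn_eq _.+1 (fingraph.order g (froot g y))) addnC iterD iterM.
by rewrite (iter_fix _ (iter_order (@perm_inj _ g) _)) findex_iter ?ltn_pmod.
Qed.

Lemma card_cycle_pos_mod x d r : r < d -> d %| #|porbit g x| ->
  #|[set y in porbit g x | cycle_pos y %% d == r]| = #|porbit g x| %/ d.
Proof.
move=> lt_rd dvd_d; set z := froot g x.
have orbit_z y : (y \in porbit g x) = (y \in orbit g z).
  by rewrite -fconnect_orbit fconnect_froot porbit_fconnect.
have pos_z y : y \in orbit g z -> cycle_pos y = findex g z y.
  rewrite -fconnect_orbit => zy; congr findex.
  by apply/esym/(rootP fconnect_perm_sym); rewrite -fconnect_froot.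
transitivity (count (fun y => findex g z y %% d == r) (orbit g z)).
  rewrite -size_filter -(card_uniqP (filter_uniq _ (orbit_uniq g z))).
  apply: eq_card => y; rewrite !inE mem_filter orbit_z andbC.
  by case zy: (y \in orbit g z); rewrite ?andbF ?andbT // pos_z.
rewrite -(count_map (findex g z) (fun i => i %% d == r)).
have -> : map (findex g z) (orbit g z) = iota 0 (fingraph.order g z).
  apply: (@eq_from_nth _ 0) => [|i]; rewrite size_map size_orbit ?size_iota // => lt_i.
  by rewrite (nth_map z) ?size_orbit // nth_traject // findex_iter // nth_iota.
by rewrite order_froot -{1}(divnK dvd_d) mulnC count_mod_iota.
Qed.

End Cycles.

Section BlockClusters.
Variables (T : finType) (g : {perm T}) (k m : nat) (P : {set {set T}}).
Hypotheses (partP : partition P [set: T]) (card_P : #|P| = k).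
Hypotheses (card_block : {in P, forall B : {set T}, #|B| = m})
  (stableP : {in P, forall B : {set T}, g @: B \in P}).

Let trivP : trivIset P := partition_trivIset partP.

Definition block_perm : {perm {set T}} := perm (imset_inj (@perm_inj _ g)).

Lemma block_permX i B : (block_perm ^+ i)%g B = (g ^+ i)%g @: B.
Proof.
elim: i => [|i IHi].
  by rewrite !expg0 perm1 -[LHS]imset_id; apply: eq_imset => x; rewrite perm1.
by rewrite !expgSr permM IHi permE -imset_comp; apply: eq_imset => x /=; rewrite permM.
Qed.

Lemma porbit_block_perm_sub B : B \in P -> porbit block_perm B \subset P.
Proof.
move=> BP; apply/subsetP => _ /porbitP[i ->].
elim: i => [|i IHi]; first by rewrite expg0 perm1.
by rewrite expgSr permM permE stableP.
Qed.

Definition clusters := porbit block_perm @: P.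

Lemma clusters_porbit Q B : Q \in clusters -> B \in Q -> Q = porbit block_perm B.
Proof. by case/imsetP => B0 _ -> /porbit_eq. Qed.

Lemma partition_clusters : partition clusters P.
Proof.
apply/and3P; split.
- apply/eqP/setP => B; apply/bigcupP/idP => [[_ /imsetP[B0 B0P ->]] | BP].
    exact/subsetP/porbit_block_perm_sub.
  by exists (porbit block_perm B); [apply: imset_f | apply: porbit_id].
- apply: trivIsetS (partition_trivIset (partition_porbits block_perm)).
  by apply/subsetP => _ /imsetP[B _ ->]; apply: imset_f.
- by apply/imsetP => -[B _ /setP/(_ B)]; rewrite porbit_id inE.
Qed.

Lemma porbit_sub_cover_cluster Q x : Q \in clusters -> x \in cover Q ->
  porbit g x \subset cover Q.
Proof.
move=> QQ /bigcupP[B BQ xB]; rewrite (clusters_porbit QQ BQ).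
apply/subsetP => _ /porbitP[i ->]; apply/bigcupP; exists ((block_perm ^+ i)%g B).
  exact: mem_porbit.
by rewrite block_permX; apply: imset_f.
Qed.

Lemma card_cycle_cluster Q C B : Q \in clusters -> C \in porbits g ->
  C \subset cover Q -> B \in Q -> #|C| = #|Q| * #|C :&: B|.
Proof.
move=> QQ CC sCQ BQ.
have QP : Q \subset P by case/imsetP: QQ => B0 B0P ->; apply: porbit_block_perm_sub.
rewrite -(sum_card_setI (trivIsetS QP trivP) sCQ) -sum_nat_const.
apply: eq_bigr => B'; rewrite (clusters_porbit QQ BQ) => /porbitP[i ->].
have inj_gi := @perm_inj _ (g ^+ i)%g.
by rewrite block_permX -{1}(imset_porbits i CC) -imsetI ?card_imset // => x y _ _ /inj_gi.
Qed.

Lemma cycle_sub_cover_cluster Q C x : Q \in clusters -> C \in porbits g -> x \in C ->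
  (C \subset cover Q) = (Q == pblock clusters (pblock P x)).
Proof.
move=> QQ CC xC; have trivQ := partition_trivIset partition_clusters.
have xP : x \in cover P by rewrite (cover_partition partP).
apply/idP/eqP => [/subsetP/(_ x xC)/bigcupP[B BQ xB] | defQ].
  have BP : B \in P.
    by rewrite -(cover_partition partition_clusters); apply/bigcupP; exists Q.
  by rewrite (def_pblock trivP BP xB) (def_pblock trivQ QQ BQ).
rewrite (porbitsE CC xC); apply: porbit_sub_cover_cluster => //.
apply/bigcupP; exists (pblock P x); last by rewrite mem_pblock.
by rewrite defQ mem_pblock (cover_partition partition_clusters) pblock_mem.
Qed.

Definition cluster_cycles (Q : {set {set T}}) : seq {set T} :=
  [seq C : {set T} <- enum (porbits g) | C \subset cover Q].

Definition cluster_type (Q : {set {set T}}) : seq nat :=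
  [seq #|C| | C : {set T} <- cluster_cycles Q].

Lemma cluster_ic_partition Q : Q \in clusters -> ic_partition (cluster_type Q) #|Q| m.
Proof.
move=> QQ; have [B BP defQ] := imsetP QQ.
have BQ : B \in Q by rewrite defQ porbit_id.
have card_C C : C \in cluster_cycles Q -> #|C| = #|Q| * #|C :&: B|.
  by rewrite mem_filter mem_enum => /andP[sCQ CC]; apply: card_cycle_cluster.
exists [seq #|C :&: B| | C : {set T} <- cluster_cycles Q]; split; last first.
  rewrite /cluster_type -map_comp.
  by have /eq_in_map -> : {in cluster_cycles Q, (fun C : {set T} => #|C|) =1
                                                muln #|Q| \o (fun C => #|C :&: B|)}.
apply/andP; split.
  apply/allP => _ /mapP[C CQ ->].
  have : 0 < #|C|.
    move: CQ; rewrite mem_filter mem_enum => /andP[_ /imsetP[x _ ->]].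
    by rewrite lt0n card_porbit_neq0.
  by rewrite card_C // muln_gt0 => /andP[].
apply/eqP; rewrite sumnE big_map big_filter big_enum_cond /= -(card_block BP).
rewrite -(sum_card_porbitsI g) big_mkcondr /=; apply: eq_bigr => C CC.
case: ifPn => [_ | nsCQ]; first by rewrite setIC.
apply/esym/eqP; rewrite cards_eq0; apply: contraNT nsCQ => /set0Pn[y /setIP[yB yC]].
rewrite (porbitsE CC yC); apply: porbit_sub_cover_cluster => //.
by apply/bigcupP; exists B.
Qed.

Lemma block_system_i_partition : i_partition (cycle_type g) k m.
Proof.
split.
  rewrite -card_P -(card_uniform_partition card_block partP) cardsT.
  exact: cycle_type_partition.
exists (map cluster_type (enum clusters)).
exists [seq #|Q| | Q : {set {set T}} <- enum clusters]; split.
- rewrite /cluster_type (map_comp (map _) cluster_cycles) -map_flatten perm_sym perm_map //.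
  apply: perm_flatten_filter => C; rewrite mem_enum => CC; have [x _ defC] := imsetP CC.
  have xC : x \in C by rewrite defC porbit_id.
  transitivity (count (pred1 (pblock clusters (pblock P x))) (enum clusters)).
    by apply: eq_in_count => Q; rewrite mem_enum => QQ; apply: cycle_sub_cover_cluster.
  rewrite count_uniq_mem ?enum_uniq // mem_enum pblock_mem //.
  by rewrite (cover_partition partition_clusters) pblock_mem ?(cover_partition partP).
- apply/andP; split.
    apply/allP => _ /mapP[Q /[!mem_enum] /imsetP[B _ ->] ->].
    by rewrite card_gt0; apply/set0Pn; exists B; apply: porbit_id.
  by rewrite sumnE big_map big_enum /= -card_P (card_partition partition_clusters).
- by rewrite !size_map.
- move=> i /[!size_map] lt_i; rewrite !(nth_map set0) //.
  by apply: cluster_ic_partition; rewrite -mem_enum mem_nth.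
Qed.

End BlockClusters.

Definition block_system (T : finType) (g : {perm T}) (D : {set T}) (k m : nat)
    (P : {set {set T}}) : Prop :=
  [/\ partition P D, #|P| = k, {in P, forall B : {set T}, #|B| = m} &
      {in P, forall B : {set T}, g @: B \in P}].

Lemma block_systemU (T : finType) (g : {perm T}) (D1 D2 : {set T}) k1 k2 m P1 P2 :
  [disjoint D1 & D2] -> block_system g D1 k1 m P1 -> block_system g D2 k2 m P2 ->
  block_system g (D1 :|: D2) (k1 + k2) m (P1 :|: P2).
Proof.
move=> disjD [partP1 <- card1 stable1] [partP2 <- card2 stable2].
have [partP cardP] := partitionU partP1 partP2 disjD.
split=> // B /setUP[] BP; first by rewrite card1.
- by rewrite card2.
- by rewrite inE stable1.
- by rewrite inE stable2 ?orbT.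
Qed.

Definition cycles_cover (T : finType) (g : {perm T}) (S : seq {set T}) : {set T} :=
  [set y | porbit g y \in S].

Section ResidueBlocks.
Variables (T : finType) (g : {perm T}) (S : seq {set T}) (d m : nat).
Hypotheses (uniqS : uniq S) (S_cycles : {subset S <= porbits g}).
Hypotheses (d_gt0 : 0 < d) (m_gt0 : 0 < m).
Hypothesis dvd_S : forall C, C \in S -> d %| #|C|.
Hypothesis sum_S : \sum_(C <- S) #|C| %/ d = m.

Definition residue_block r :=
  [set y | (porbit g y \in S) && (cycle_pos g y %% d == r)].

Lemma card_residue_block r : r < d -> #|residue_block r| = m.
Proof.
move=> lt_rd; rewrite -(sum_card_porbitsI g (residue_block r)) -sum_S big_uniq //.
rewrite big_mkcond [RHS]big_mkcond /=; apply: eq_bigr => C _.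
case CS: (C \in S).
  have CC := S_cycles CS; have /imsetP[x _ defC] := CC.
  rewrite CC defC -(card_cycle_pos_mod (x := x) lt_rd) -?defC ?dvd_S //.
  apply: eq_card => z; rewrite !inE.
  by case zC: (z \in C); rewrite ?andbF //= andbT -(porbitsE CC zC) CS.
case: ifP => // CC; apply/eqP; rewrite cards_eq0; apply/eqP/setP => z.
rewrite !inE; apply/negP => /andP[/andP[zS _] zC].
by rewrite -(porbitsE CC zC) CS in zS.
Qed.

Lemma residue_block_perm1 r : r < d -> g @: residue_block r = residue_block (r.+1 %% d).
Proof.
move=> lt_rd; apply/eqP; rewrite eqEcard card_imset; last exact: perm_inj.
rewrite !card_residue_block ?ltn_pmod // leqnn andbT.
apply/subsetP => _ /imsetP[y /[!inE] /andP[yS /eqP <-] ->].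
rewrite porbit_perm1 yS cycle_pos_perm1 /= modn_dvdm ?dvd_S //.
by rewrite -addn1 -modnDml addn1.
Qed.

Definition residue_blocks := [set residue_block i | i : 'I_d].

Lemma residue_block_inj : injective (fun i : 'I_d => residue_block i).
Proof.
move=> i j eq_ij; have : 0 < #|residue_block i| by rewrite card_residue_block.
case/card_gt0P => y yi; move: (yi); rewrite eq_ij !inE => /andP[_ /eqP yj].
by move: yi; rewrite inE => /andP[_ /eqP yi]; apply: val_inj; rewrite /= -yi -yj.
Qed.

Lemma residue_block_system : block_system g (cycles_cover g S) d m residue_blocks.
Proof.
split.
- apply/and3P; split.
  + apply/eqP/setP => y; rewrite inE; apply/bigcupP/idP => [[_ /imsetP[i _ ->]] | yS].
      by rewrite inE => /andP[].
    exists (residue_block (Ordinal (ltn_pmod (cycle_pos g y) d_gt0))); first exact: imset_f.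
    by rewrite inE yS /=.
  + apply/trivIsetP => _ _ /imsetP[i _ ->] /imsetP[j _ ->] neq_ij.
    apply/pred0P => y /=; rewrite !inE; apply/negP.
    case/andP => /andP[_ /eqP yi] /andP[_ /eqP yj].
    by move/eqP: neq_ij; apply; congr residue_block; rewrite -yi -yj.
  + apply/imsetP => -[i _ /esym/eqP]; apply/negP.
    by rewrite -cards_eq0 card_residue_block // -lt0n.
- by rewrite card_imset ?card_ord //; apply: residue_block_inj.
- by move=> _ /imsetP[i _ ->]; apply: card_residue_block.
- move=> _ /imsetP[i _ ->]; rewrite residue_block_perm1 //.
  by apply/imsetP; exists (Ordinal (ltn_pmod i.+1 d_gt0)).
Qed.

End ResidueBlocks.

Lemma ic_cluster_block_system (T : finType) (g : {perm T}) (S : seq {set T}) (d m : nat) :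
  0 < d -> 0 < m -> uniq S -> {subset S <= porbits g} ->
  ic_partition [seq #|C| | C : {set T} <- S] d m ->
  block_system g (cycles_cover g S) d m (residue_blocks g S d).
Proof.
move=> d_gt0 m_gt0 uniqS S_cycles [mu [/andP[_ /eqP sum_mu] perm_mu]].
apply: residue_block_system => // [C CS|].
  have : #|C| \in map (muln d) mu by rewrite -(perm_mem perm_mu) map_f.
  by case/mapP => x _ ->; apply: dvdn_mulr.
rewrite -sum_mu -(big_map (fun C : {set T} => #|C|) predT (divn^~ d)).
by rewrite (perm_big _ perm_mu) big_map sumnE; apply: eq_bigr => x _; rewrite mulKn.
Qed.

Lemma block_system_of_clusters (T : finType) (g : {perm T}) (m : nat)
    (cl : seq (seq nat)) (ks : seq nat) (S : seq {set T}) :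
  0 < m -> uniq S -> {subset S <= porbits g} ->
  [seq #|C| | C : {set T} <- S] = flatten cl ->
  size ks = size cl -> all (fun k => 0 < k) ks ->
  (forall i, i < size cl -> ic_partition (nth [::] cl i) (nth 0 ks i) m) ->
  exists P, block_system g (cycles_cover g S) (sumn ks) m P.
Proof.
move=> m_gt0; elim: cl ks S => [|c cl IHcl] [|d ks] S //= uniqS S_cycles cardS.
  move=> _ _ _; exists set0; split=> [||B|B]; rewrite ?cards0 ?inE //.
  case: S cardS {uniqS S_cycles} => // _; rewrite partition_set0.
  by apply/eqP/setP => y; rewrite !inE.
move=> [size_ks] /andP[d_gt0 ks_gt0] ic.
set S1 := take (size c) S; set S2 := drop (size c) S.
have defS : S = S1 ++ S2 by rewrite cat_take_drop.
have /and3P[uniqS1 disjS12 uniqS2] : [&& uniq S1, ~~ has (mem S1) S2 & uniq S2].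
  by rewrite -cat_uniq -defS.
have [S1_cycles S2_cycles] : {subset S1 <= porbits g} /\ {subset S2 <= porbits g}.
  by split=> C CS; apply: S_cycles; rewrite defS mem_cat CS ?orbT.
have cardS1 : [seq #|C| | C : {set T} <- S1] = c by rewrite map_take cardS take_size_cat.
have cardS2 : [seq #|C| | C : {set T} <- S2] = flatten cl.
  by rewrite map_drop cardS drop_size_cat.
have ic1 : ic_partition [seq #|C| | C : {set T} <- S1] d m by rewrite cardS1; apply: (ic 0).
have sysP1 := ic_cluster_block_system d_gt0 m_gt0 uniqS1 S1_cycles ic1.
have [P2 sysP2] := IHcl ks S2 uniqS2 S2_cycles cardS2 size_ks ks_gt0 (fun i => ic i.+1).
exists (residue_blocks g S1 d :|: P2).
have -> : cycles_cover g S = cycles_cover g S1 :|: cycles_cover g S2.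
  by apply/setP => y; rewrite !inE defS mem_cat.
apply: block_systemU sysP1 sysP2; apply/pred0P => y /=; rewrite !inE.
by apply/negP => /andP[yS1 yS2]; move/hasP: disjS12; apply; exists (porbit g y).
Qed.

Lemma i_partition_block_system (T : finType) (g : {perm T}) (k m : nat) :
  0 < m -> i_partition (cycle_type g) k m -> preserves_block_system g k m.
Proof.
move=> m_gt0 [_ [cl [ks [perm_cl /andP[ks_gt0 /eqP sum_ks] size_ks ic]]]].
have [S perm_S cardS] := perm_map_exists perm_cl.
have S_cycles : {subset S <= porbits g} by move=> C; rewrite (perm_mem perm_S) mem_enum.
have uniqS : uniq S by rewrite (perm_uniq perm_S) enum_uniq.
have [P sysP] := block_system_of_clusters m_gt0 uniqS S_cycles cardS size_ks ks_gt0 ic.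
exists P; rewrite -sum_ks; suff <- : cycles_cover g S = [set: T] by [].
by apply/setP => y; rewrite !inE (perm_mem perm_S) mem_enum imset_f.
Qed.

Theorem mainTheorem2 (k m : nat) (hk : 1 < k) (hm : 1 < m) (g : {perm 'I_(k * m)}) :
  preserves_block_system g k m <-> i_partition (cycle_type g) k m.
Proof.
split=> [[P [partP card_P card_block stableP]] | ].
  exact: block_system_i_partition partP card_P card_block stableP.
exact/i_partition_block_system/ltnW.
Qed.
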